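(* Let $P\subseteq\mathbb{P}^{n-1}$ be a full-dimensional polytope and fix $1\le k\le n$. Then $P^{[k]}=\mathrm{cl}(P^{[k]}_{\max})$, the closure being taken in $\mathrm{Gr}(k,n)$.
   Context: Work over $\mathbb{R}$. $\mathrm{Gr}(k,n)$ is the Grassmannian of $k$-dimensional linear subspaces of $\mathbb{R}^n$; subspaces are identified with their images in $\mathbb{P}^{n-1}$. A polytope $P\subseteq\mathbb{P}^{n-1}$ is the image in $\mathbb{P}^{n-1}$ of a cone $\{\sum c_iv_i: c_i\ge0\}$ over finitely many $v_i\in\mathbb{R}^n$ (projectivization of the cone over a polytope in an affine hyperplane not through the origin); faces and dimensions are those of the underlying polytope. $P^{[k]}=\{V\in\mathrm{Gr}(k,n)\mid V\cap P\ne\emptyset\}$ and $P^{[k]}_{\max}=\{V\in P^{[k]}\mid V\cap G=\emptyset$ for every face $G$ of $P$ with $\dim G<n-k\}$. *)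

From HB Require Import structures.
From mathcomp Require Import all_boot all_order all_algebra.
From mathcomp Require Import reals.
Set Implicit Arguments. Unset Strict Implicit. Unset Printing Implicit Defensive.
Import Order.TTheory GRing.Theory Num.Theory.
Local Open Scope ring_scope.

(* A polytope P in P^{n-1} is given by
   finitely many generators v_1..v_m, the rows of G : 'M[R]_(m,n); its cone is
   { sum c_i v_i | c_i >= 0 }, and a point of P is a nonzero vector of the cone
   (up to scaling). *)

Definition in_cone (R : realType) (m n : nat) (G : 'M[R]_(m, n)) (x : 'rV[R]_n) : Prop :=
  exists c : 'rV[R]_m, (forall i, 0 <= c 0 i) /\ x = c *m G.

(* The cone is the cone over a polytope in an affine hyperplane not through 0:
   some linear functional l is positive on all generators. *)
Definition pointed_gens (R : realType) (m n : nat) (G : 'M[R]_(m, n)) : Prop :=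
  exists l : 'cV[R]_n, forall i, 0 < (row i G *m l) 0 0.

(* P is full-dimensional (dim P = n-1): the generators span R^n. *)
Definition full_dim (R : realType) (m n : nat) (G : 'M[R]_(m, n)) : Prop :=
  \rank G = n.

(* Faces of P: w is a supporting functional of the cone (w >= 0 on the cone);
   the corresponding face of the cone is cone ∩ {w = 0}.  Every face of the
   polytope (including the empty face and P itself) arises this way. *)
Definition supporting (R : realType) (m n : nat) (G : 'M[R]_(m, n)) (w : 'cV[R]_n) : Prop :=
  forall i, 0 <= (row i G *m w) 0 0.

Definition in_face (R : realType) (m n : nat) (G : 'M[R]_(m, n)) (w : 'cV[R]_n)
  (x : 'rV[R]_n) : Prop :=
  in_cone G x /\ (x *m w) 0 0 = 0.

(* Since the face G of P is the projectivization
   of this cone face, dim G = (linear dim of cone face) - 1. *)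
Definition face_cone_dim_le (R : realType) (m n : nat) (G : 'M[R]_(m, n)) (w : 'cV[R]_n)
  (d : nat) : Prop :=
  forall r (A : 'M[R]_(r, n)), row_free A -> (forall i, in_face G w (row i A)) -> (r <= d)%N.

(* Points of Gr(k,n) are row spaces of full-rank k x n matrices. *)

Definition Pk (R : realType) (m n k : nat) (G : 'M[R]_(m, n)) (A : 'M[R]_(k, n)) : Prop :=
  exists x : 'rV[R]_n, x != 0 /\ in_cone G x /\ (x <= A)%MS.

(* V ∈ P^[k] and V misses every face G of P with dim G < n-k,
   i.e. with (linear dim of the cone face) <= n-k. *)
Definition Pk_max (R : realType) (m n k : nat) (G : 'M[R]_(m, n)) (A : 'M[R]_(k, n)) : Prop :=
  Pk G A /\
  forall w : 'cV[R]_n, supporting G w -> face_cone_dim_le G w (n - k) ->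
    ~ (exists x : 'rV[R]_n, x != 0 /\ in_face G w x /\ (x <= A)%MS).

(* Closure in Gr(k,n): Gr(k,n) carries the quotient topology of the (open) set of
   full-rank k x n matrices; the quotient map is open, so the row space of a
   full-rank A lies in the closure of S iff A is a limit of full-rank matrices
   whose row spaces lie in S. *)
Definition Gr_closure (R : realType) (k n : nat) (S : 'M[R]_(k, n) -> Prop)
  (A : 'M[R]_(k, n)) : Prop :=
  forall e : R, 0 < e ->
    exists B : 'M[R]_(k, n), row_free B /\ S B /\ forall i j, `|A i j - B i j| < e.

(* Closedness: if the row space of A meets the cone only in 0, Gordan's
   alternative applied to the generators modulo row(A) gives w with A w = 0
   and w > 0 on every generator.  Such a w is coercive on the cone, and this
   persists on row spaces of matrices near A, so they miss the cone as well.

   Density: given x <> 0 in V /\ cone, the point p = x + t (v_1 + ... + v_m)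
   lies on no proper face.  Complete p to a basis of a space near V by a
   generic perturbation of the remaining basis vectors: general position with
   respect to the finitely many spans of faces of dimension < n - k (obtained
   by moving along moment curves, which avoid any proper subspace outside
   finitely many parameters) forces the new space to meet none of them. *)

From HB Require Import structures.
From mathcomp Require Import all_boot all_order all_algebra.
From mathcomp Require Import reals.
From mathcomp Require Import ring lra zify.
Import Order.TTheory GRing.Theory Num.Theory.
Local Open Scope ring_scope.

Set Implicit Arguments. Unset Strict Implicit. Unset Printing Implicit Defensive.

Lemma mxrank_adds_notsub (F : fieldType) m n (X : 'M[F]_(m, n)) (v : 'rV[F]_n) :
  ~~ (v <= X)%MS -> \rank (X + v)%MS = (\rank X).+1.
Proof.
move=> vX; have v0 : v != 0 by apply: contraNneq vX => ->; rewrite sub0mx.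
have rv : \rank v = 1%N by rewrite rank_rV v0.
apply/eqP; have := (mxrank_adds_leqif X v).2; rewrite rv addn1 => ->.
rewrite submx0 -mxrank_eq0; apply: contraNT vX => cap0.
apply: submx_trans (capmxSl X v); rewrite -(mxrank_leqif_sup (capmxSr X v)).2 rv.
by rewrite eqn_leq lt0n cap0 andbT -[Y in (_ <= Y)%N]rv mxrankS ?capmxSr.
Qed.

Section MxNorm1.
Variable R : realFieldType.

Definition mxnorm1 m n (X : 'M[R]_(m, n)) : R := \sum_i \sum_j `|X i j|.

Lemma mxnorm1_ge0 m n (X : 'M[R]_(m, n)) : 0 <= mxnorm1 X.
Proof. by apply: sumr_ge0 => i _; apply: sumr_ge0. Qed.

Lemma mxnorm1_0 m n : mxnorm1 (0 : 'M[R]_(m, n)) = 0.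
Proof. by rewrite /mxnorm1 big1 // => i _; rewrite big1 // => j _; rewrite mxE normr0. Qed.

Lemma mxnorm1_row m n (X : 'M[R]_(m, n)) i : \sum_j `|X i j| <= mxnorm1 X.
Proof. by rewrite /mxnorm1 (bigD1 i) //= lerDl; apply: sumr_ge0 => ? _; apply: sumr_ge0. Qed.

Lemma mxnorm1_entry m n (X : 'M[R]_(m, n)) i j : `|X i j| <= mxnorm1 X.
Proof.
apply: le_trans (mxnorm1_row X i).
by rewrite (bigD1 j) //= lerDl; apply: sumr_ge0.
Qed.

Lemma mxnorm1D m n (X Y : 'M[R]_(m, n)) : mxnorm1 (X + Y) <= mxnorm1 X + mxnorm1 Y.
Proof.
rewrite /mxnorm1 -big_split; apply: ler_sum => i _.
by rewrite -big_split; apply: ler_sum => j _; rewrite mxE ler_normD.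
Qed.

Lemma mxnorm1N m n (X : 'M[R]_(m, n)) : mxnorm1 (- X) = mxnorm1 X.
Proof. by apply: eq_bigr => i _; apply: eq_bigr => j _; rewrite mxE normrN. Qed.

Lemma mxnorm1_distC m n (X Y : 'M[R]_(m, n)) : mxnorm1 (X - Y) = mxnorm1 (Y - X).
Proof. by rewrite -mxnorm1N opprB. Qed.

Lemma mxnorm1Z m n a (X : 'M[R]_(m, n)) : mxnorm1 (a *: X) = `|a| * mxnorm1 X.
Proof.
rewrite /mxnorm1 mulr_sumr; apply: eq_bigr => i _; rewrite mulr_sumr.
by apply: eq_bigr => j _; rewrite mxE normrM.
Qed.

Lemma mxnorm1M m n p (X : 'M[R]_(m, n)) (Y : 'M[R]_(n, p)) :
  mxnorm1 (X *m Y) <= mxnorm1 X * mxnorm1 Y.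
Proof.
rewrite /mxnorm1 mulr_suml; apply: ler_sum => i _.
apply: (@le_trans _ _ (\sum_j \sum_l `|X i l| * `|Y l j|)).
  apply: ler_sum => j _; rewrite mxE (le_trans (ler_norm_sum _ _ _)) //.
  by apply: ler_sum => l _; rewrite normrM.
rewrite exchange_big mulr_suml; apply: ler_sum => l _.
by rewrite -mulr_sumr ler_wpM2l // mxnorm1_row.
Qed.

Lemma row_mulmx_entry m n (X : 'M[R]_(m, n)) (w : 'cV[R]_n) i :
  (row i X *m w) 0 0 = (X *m w) i 0.
Proof. by rewrite -row_mul mxE. Qed.

Lemma mxnorm1_col_mx m1 m2 n (X : 'M[R]_(m1, n)) (Y : 'M[R]_(m2, n)) :
  mxnorm1 (col_mx X Y) = mxnorm1 X + mxnorm1 Y.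
Proof.
rewrite /mxnorm1 big_split_ord; congr (_ + _); apply: eq_bigr => i _;
  by apply: eq_bigr => j _; rewrite ?col_mxEu ?col_mxEd.
Qed.

Lemma mxnorm1_col_mxB m1 m2 n (X1 Y1 : 'M[R]_(m1, n)) (X2 Y2 : 'M[R]_(m2, n)) :
  mxnorm1 (col_mx X1 X2 - col_mx Y1 Y2) = mxnorm1 (X1 - Y1) + mxnorm1 (X2 - Y2).
Proof. by rewrite opp_col_mx add_col_mx mxnorm1_col_mx. Qed.

Lemma mxnorm1_le_entries m n (X : 'M[R]_(m, n)) e :
  (forall i j, `|X i j| <= e) -> mxnorm1 X <= (m * n)%:R * e.
Proof.
move=> Xe; apply: (@le_trans _ _ (\sum_(i < m) \sum_(j < n) e)).
  by apply: ler_sum => i _; apply: ler_sum.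
by rewrite !sumr_const !card_ord -mulrnA mulr_natl mulnC.
Qed.

Lemma mxnorm1_gt0 m n (X : 'M[R]_(m, n)) : X != 0 -> 0 < mxnorm1 X.
Proof.
case/matrix0Pn=> i [j Xij]; apply: lt_le_trans (mxnorm1_entry X i j).
by rewrite normr_gt0.
Qed.

Lemma mxnorm1_small m n (d : R) : 0 < d ->
  exists2 e, 0 < e & forall X : 'M[R]_(m, n), (forall i j, `|X i j| < e) -> mxnorm1 X < d.
Proof.
move=> d0; have mn1 : 0 < (m * n)%:R + 1 :> R by rewrite ltr_wpDl ?ler0n.
exists (d / ((m * n)%:R + 1)) => [|X Xe]; first by rewrite divr_gt0.
apply: le_lt_trans (mxnorm1_le_entries (fun i j => ltW (Xe i j))) _.
by rewrite mulrCA gtr_pMr // ltr_pdivrMr // mul1r ltrDl ltr01.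
Qed.

Lemma mxnorm1_coef_le p k n (A B : 'M[R]_(k, n)) (Ap : 'M[R]_(n, k)) (beta : 'M[R]_(p, k)) :
  A *m Ap = 1%:M -> 2 * mxnorm1 (A - B) * mxnorm1 Ap <= 1 ->
  mxnorm1 beta <= 2 * mxnorm1 (beta *m B *m Ap).
Proof.
move=> AAp small.
have beta_split : beta = beta *m B *m Ap + beta *m (A - B) *m Ap.
  by rewrite -!mulmxA -mulmxDr mulmxBl addrC subrK AAp mulmx1.
have err : mxnorm1 (beta *m (A - B) *m Ap)
    <= mxnorm1 beta * mxnorm1 (A - B) * mxnorm1 Ap.
  exact: le_trans (mxnorm1M _ _) (ler_wpM2r (mxnorm1_ge0 _) (mxnorm1M _ _)).
have := ler_wpM2l (mxnorm1_ge0 beta) small.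
have := mxnorm1D (beta *m B *m Ap) (beta *m (A - B) *m Ap); rewrite -beta_split.
lra.
Qed.

End MxNorm1.

Section Gordan.
Variable R : realFieldType.

Lemma separating_point (I : finType) (P Q : pred I) (L U : I -> R) :
  (forall p q, P p -> Q q -> L p < U q) ->
  exists z, (forall p, P p -> L p < z) /\ (forall q, Q q -> z < U q).
Proof.
move=> LU.
pose b := \big[Num.min/1 + \sum_(p | P p) `|L p|]_(q | Q q) U q.
have Lb p : P p -> L p < b.
  move=> Pp; apply/bigmin_gtP; split=> [|q Qq]; last exact: LU.
  by rewrite (bigD1 p) //= addrCA ltr_pwDr ?ler_norm // ltr_wpDr ?sumr_ge0.
pose a := \big[Num.max/b - 1]_(p | P p) L p.
have ab : a < b by apply/bigmax_ltP; split; [rewrite gtrBl ltr01 | exact: Lb].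
exists ((a + b) / 2); split=> [p Pp | q Qq].
  by have := le_bigmax_cond (b - 1) L Pp; rewrite -/a; lra.
by have := bigmin_le_cond (1 + \sum_(p | P p) `|L p|) U Qq; rewrite -/b; lra.
Qed.

Lemma sum_delta_scale (I : finType) (V : lmodType R) (F : I -> V) j :
  \sum_i (i == j)%:R *: F i = F j.
Proof.
rewrite (bigD1 j) //= eqxx scale1r big1 ?addr0 // => i /negbTE ->.
by rewrite scale0r.
Qed.

Lemma mul_row_col_head n (u : 'rV[R]_(1 + n)) z0 (z : 'cV[R]_n) :
  (u *m col_mx z0%:M z) 0 0 = lsubmx u 0 0 * z0 + (rsubmx u *m z) 0 0.
Proof.
by rewrite -{1}(hsubmxK u) mul_row_col mul_mx_scalar mxE [_ 0 0]mxE mulrC.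
Qed.

Section FourierMotzkin.
Variables (n : nat) (I : finType) (h : I -> 'rV[R]_(1 + n)).

(* Fourier-Motzkin elimination of the first coordinate [a i] of the [h i]: the
   new family consists of the [h i] with [a i = 0] and, for every pair with
   [a p > 0 > a q], the combination of [h p] and [h q] killing that coordinate. *)
Let a i := lsubmx (h i) 0 0.
Let r i := rsubmx (h i).

Definition fm_index :=
  ({i : I | a i == 0} + {pq : I * I | (0 < a pq.1) && (a pq.2 < 0)})%type.

Definition fm_coef (x : fm_index) (i : I) : R :=
  match x with
  | inl j => (i == val j)%:R
  | inr pq => (i == (val pq).1)%:R * - a (val pq).2 + (i == (val pq).2)%:R * a (val pq).1
  end.

Definition fm_pt (x : fm_index) : 'rV[R]_(1 + n) :=
  match x with
  | inl j => h (val j)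
  | inr pq => - a (val pq).2 *: h (val pq).1 + a (val pq).1 *: h (val pq).2
  end.

Definition fm_vec (x : fm_index) : 'rV[R]_n := rsubmx (fm_pt x).

Lemma fm_coef_ge0 x i : 0 <= fm_coef x i.
Proof.
case: x => [j | [[p q] /= /andP[ap aq]]] /=; first by rewrite ler0n.
by rewrite addr_ge0 ?mulr_ge0 ?ler0n ?oppr_ge0 ?ltW.
Qed.

Lemma fm_comb x : \sum_i fm_coef x i *: h i = row_mx 0 (fm_vec x).
Proof.
have -> : \sum_i fm_coef x i *: h i = fm_pt x.
  case: x => [j | [[p q] _]] /=; first exact: sum_delta_scale.
  under eq_bigr do rewrite scalerDl -!scalerA.
  by rewrite big_split /= !(sum_delta_scale (fun i => _ *: h i)).
have ha i : h i 0 (lshift n 0) = a i by rewrite /a mxE.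
rewrite -[LHS]hsubmxK; congr row_mx; apply/rowP => k.
case: x => [[j /= /eqP aj] | [[p q] /= _]]; rewrite ord1 !mxE ?ha //.
by rewrite mulNr mulrC addNr.
Qed.

Lemma fm_lift_dual :
  (exists z' : 'cV[R]_n, forall x, 0 < (fm_vec x *m z') 0 0) ->
  exists z : 'cV[R]_(1 + n), forall i, 0 < (h i *m z) 0 0.
Proof.
case=> z' hz'.
pose L p := - (r p *m z') 0 0 / a p.
pose U q := (r q *m z') 0 0 / - a q.
have [z0 [Lz zU]] : exists z0,
    (forall p, 0 < a p -> L p < z0) /\ (forall q, a q < 0 -> z0 < U q).
  apply: separating_point => p q ap aq.
  have := hz' (inr (exist _ (p, q) (introT andP (conj ap aq)))).
  rewrite /fm_vec /= linearD !linearZ /= mulmxDl -!scalemxAl !mxE -/(r p) -/(r q).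
  by rewrite /L /U ltr_pdivrMr // mulrAC ltr_pdivlMr ?oppr_gt0 // !mxE; lra.
exists (col_mx z0%:M z') => i; rewrite mul_row_col_head -/(a i) -/(r i).
case: (ltgtP (a i) 0) => ai.
- by have := zU i ai; rewrite /U ltr_pdivlMr ?oppr_gt0 //; lra.
- by have := Lz i ai; rewrite /L ltr_pdivrMr //; lra.
- by rewrite ai mul0r add0r; exact: hz' (inl (exist _ i (introT eqP ai))).
Qed.

Lemma fm_lift_primal :
  (exists c' : fm_index -> R,
     [/\ forall x, 0 <= c' x, exists x, 0 < c' x & \sum_x c' x *: fm_vec x = 0]) ->
  exists c : I -> R, [/\ forall i, 0 <= c i, exists i, 0 < c i & \sum_i c i *: h i = 0].
Proof.
case=> c' [c'_ge0 [x0 c'x0] c'_sum].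
exists (fun i => \sum_x c' x * fm_coef x i); split.
- by move=> i; apply: sumr_ge0 => x _; rewrite mulr_ge0 ?fm_coef_ge0.
- have [i coef_gt0] : exists i, 0 < fm_coef x0 i.
    case: x0 {c'x0} => [j | [[p q] /= /andP[ap aq]]]; [exists (val j) | exists p];
      rewrite /= eqxx ?ltr01 // mul1r ltr_wpDr ?mulr_ge0 ?ler0n ?ltW //.
    by rewrite oppr_gt0.
  exists i; rewrite (bigD1 x0) //= ltr_wpDr ?mulr_gt0 //.
  by apply: sumr_ge0 => x _; rewrite mulr_ge0 ?fm_coef_ge0.
- under eq_bigr do rewrite scaler_suml.
  rewrite exchange_big /=.
  rewrite (eq_bigr (fun x => row_mx 0 (c' x *: fm_vec x))) => [|x _]; last first.
    move/(congr1 ( *:%R (c' x))): (fm_comb x); rewrite scale_row_mx scaler0 scaler_sumr => <-.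
    by apply: eq_bigr => i _; rewrite scalerA.
  transitivity (row_mx 0 (\sum_x c' x *: fm_vec x) : 'rV_(1 + n)); last first.
    by rewrite c'_sum row_mx0.
  by elim/big_rec2: _ => [|x u v _ ->]; rewrite ?row_mx0 // add_row_mx addr0.
Qed.

End FourierMotzkin.

Theorem gordan n (I : finType) (h : I -> 'rV[R]_n) :
  (exists z : 'cV[R]_n, forall i, 0 < (h i *m z) 0 0) \/
  (exists c : I -> R, [/\ forall i, 0 <= c i, exists i, 0 < c i & \sum_i c i *: h i = 0]).
Proof.
elim: n I h => [|n IH] I h.
  have [i _ | I0] := pickP I; last by left; exists 0 => i; have := I0 i.
  right; exists (fun j => (j == i)%:R); split; first by move=> j; rewrite ler0n.
    by exists i; rewrite eqxx ltr01.
  by apply/rowP => -[].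
have [/fm_lift_dual | /fm_lift_primal] := IH _ (@fm_vec _ _ h); [left | right] => //.
Qed.

End Gordan.

Section GenericPosition.
Variable R : realFieldType.

Lemma exists_pmul_lt (x y : R) : 0 <= x -> 0 < y -> exists2 t, 0 < t & t * x < y.
Proof.
move=> x0 y0; have x1 : 0 < x + 1 by rewrite ltr_wpDl.
exists (y / (x + 1)); first by rewrite divr_gt0.
by rewrite mulrAC ltr_pdivrMr // ltr_pM2l // ltrDl.
Qed.

Lemma exists_nonroot (q : {poly R}) (d : R) : q != 0 -> 0 < d ->
  exists s, [/\ 0 < s, s < d & ~~ root q s].
Proof.
move=> q0 d0; pose cands := [seq d / i.+2%:R | i <- iota 0 (size q)].
have candsP s : s \in cands -> 0 < s /\ s < d.
  case/mapP=> i _ ->; rewrite divr_gt0 ?ltr0n //.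
  by rewrite ltr_pdivrMr ?ltr0n // ltr_pMr // ltr1n.
have cands_uniq : uniq cands.
  rewrite map_inj_uniq ?iota_uniq // => i j /(mulfI (lt0r_neq0 d0)) /invr_inj.
  by move/eqP; rewrite eqr_nat !eqSS => /eqP.
have /allPn[s s_cand s_nonroot] : ~~ all (root q) cands.
  apply/negP => all_roots; have := max_poly_roots q0 all_roots cands_uniq.
  by rewrite size_map size_iota ltnn.
by have [s0 sd] := candsP s s_cand; exists s.
Qed.

(* The value at s of [curve_poly a u] is the pairing of u with the point
   a + s (1, s, ..., s^(n-1)) of a moment curve through a; its coefficients
   of positive degree are the entries of u. *)
Definition moment_row n (s : R) : 'rV[R]_n := \row_i s ^+ i.

Definition curve_poly n (a : 'rV[R]_n) (u : 'cV[R]_n) : {poly R} :=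
  ((a *m u) 0 0)%:P + \sum_i u i 0 *: 'X^(i.+1).

Lemma horner_curve_poly n (a : 'rV[R]_n) u s :
  (curve_poly a u).[s] = ((a + s *: moment_row n s) *m u) 0 0.
Proof.
rewrite hornerD hornerC horner_sum mulmxDl -scalemxAl [RHS]mxE; congr (_ + _).
rewrite !mxE mulr_sumr; apply: eq_bigr => i _.
by rewrite hornerZ hornerXn !mxE exprS mulrC mulrA.
Qed.

Lemma curve_poly_neq0 n (a : 'rV[R]_n) u : u != 0 -> curve_poly a u != 0.
Proof.
case/cV0Pn => i ui.
apply: contraNneq ui => /(congr1 (coefp i.+1)) /=.
rewrite coef0 coefD coefC /= add0r coef_sum => <-.
rewrite (bigD1 i) //= coefZ coefXn eqxx mulr1 big1 ?addr0 // => j ji.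
by rewrite coefZ coefXn eqSS eq_sym val_eqE (negbTE ji) mulr0.
Qed.

Lemma mxnorm1_moment_row n (s : R) : 0 <= s <= 1 -> mxnorm1 (moment_row n s) <= n%:R.
Proof.
case/andP=> s0 s1; rewrite -[n%:R]mulr1 -[n in n%:R]mul1n.
by apply: mxnorm1_le_entries => i j; rewrite mxE ger0_norm ?exprn_ge0 ?exprn_ile1.
Qed.

Lemma avoid_subspaces mU n (J : finType) (P : pred J) (U : J -> 'M[R]_(mU, n))
    (a : 'rV[R]_n) e :
  (forall j, P j -> \rank (U j) < n)%N -> 0 < e ->
  exists v : 'rV[R]_n, mxnorm1 (v - a) < e /\ forall j, P j -> ~~ (v <= U j)%MS.
Proof.
move=> rankU e0; pose K j := cokermx (U j).
pose q := \prod_(j | P j) \prod_(l | col l (K j) != 0) curve_poly a (col l (K j)).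
have q0 : q != 0.
  by apply/prodf_neq0 => j _; apply/prodf_neq0 => l; apply: curve_poly_neq0.
have [t t0 tn] := exists_pmul_lt (ler0n R n) e0.
have [s [s0 s_lt q_s]] := exists_nonroot (d := Num.min 1 t) q0 ltac:(by rewrite lt_min ltr01 t0).
move: s_lt; rewrite lt_min => /andP[s1 st].
exists (a + s *: moment_row n s); split.
  rewrite addrC addKr mxnorm1Z ger0_norm ?ltW //; apply: le_lt_trans tn.
  apply: (le_trans (ler_wpM2l (ltW s0) (mxnorm1_moment_row n _))); first by rewrite !ltW.
  by rewrite ler_wpM2r ?ler0n ?ltW.
move=> j Pj; rewrite submxE; apply: contraNN q_s => /eqP vK0.
have /matrix0Pn[i [l Kil]] : K j != 0.
  by rewrite -mxrank_eq0 mxrank_coker subn_eq0 -ltnNge rankU.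
have Kl0 : col l (K j) != 0 by apply/cV0Pn; exists i; rewrite mxE.
rewrite /root /q horner_prod (bigD1 j) //= horner_prod (bigD1 l) //=.
by rewrite horner_curve_poly colE mulmxA vK0 mul0mx mxE !mul0r.
Qed.

Lemma transversal_perturbation mU n (J : finType) (P : pred J) (U : J -> 'M[R]_(mU, n))
    r (C : 'M[R]_(r, n)) e :
  (forall j, P j -> \rank (U j) + r <= n)%N -> 0 < e ->
  exists D : 'M[R]_(r, n), mxnorm1 (D - C) < e /\
    forall j, P j -> \rank (U j + D)%MS = (\rank (U j) + r)%N.
Proof.
elim: r C e => [|r IH] C e rankU e0.
  exists C; rewrite subrr mxnorm1_0; split=> // j _.
  by rewrite [C]flatmx0 addsmx0 addn0.
have rankU' j : P j -> (\rank (U j) + r < n)%N by move=> Pj; rewrite -addnS rankU.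
have e2 : 0 < e / 2 by rewrite divr_gt0.
have [D1 [D1C rankD1]] := IH (dsubmx (C : 'M_(1 + r, n))) (e / 2)
  (fun j Pj => ltnW (rankU' j Pj)) e2.
have [v [vC v_notin]] := @avoid_subspaces n n J P (fun j => U j + D1)%MS
  (usubmx (C : 'M_(1 + r, n))) (e / 2) (fun j Pj => ltac:(by rewrite rankD1 ?rankU')) e2.
exists (col_mx v D1); split.
  rewrite -(vsubmxK (C : 'M_(1 + r, n))).
  by rewrite (mxnorm1_col_mxB (m1 := 1)) [e]splitr ltrD.
move=> j Pj; have -> : (U j + col_mx v D1 :=: (U j + D1) + v)%MS.
  apply: eqmx_trans (adds_eqmx (eqmx_refl _) (eqmx_sym (addsmxE v D1))) _.
  by rewrite [(v + D1)%MS]addsmxC addsmxA.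
by rewrite mxrank_adds_notsub ?v_notin // rankD1 // addnS.
Qed.

Lemma row_completion k (alpha : 'rV[R]_(1 + k)) :
  alpha != 0 -> exists D : 'M[R]_(k, 1 + k), col_mx alpha D \in unitmx.
Proof.
move=> alpha0.
have [D [_ rankD]] := @transversal_perturbation 1 (1 + k) unit predT (fun=> alpha) k 0 1
  (fun _ _ => ltac:(by rewrite rank_rV alpha0)) ltr01.
exists D; rewrite -row_full_unit /row_full -addsmxE (rankD tt isT).
by rewrite rank_rV alpha0.
Qed.

End GenericPosition.

Section Cone.
Variables (R : realType) (m n : nat) (G : 'M[R]_(m, n)).

Definition gens_on (S : {set 'I_m}) : 'M[R]_(m, n) :=
  \matrix_(i, j) if i \in S then G i j else 0.

Definition face_set (w : 'cV[R]_n) : {set 'I_m} := [set i | (G *m w) i 0 == 0].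

Definition gens_sum : 'rV[R]_n := const_mx 1 *m G.

Definition in_no_proper_face (p : 'rV[R]_n) : Prop :=
  forall w, supporting G w -> (p *m w) 0 0 = 0 -> G *m w = 0.

Lemma cone_mul_entry (c : 'rV[R]_m) (w : 'cV[R]_n) :
  (c *m G *m w) 0 0 = \sum_i c 0 i * (G *m w) i 0.
Proof. by rewrite -mulmxA mxE. Qed.

Lemma cone_mul_gt0 (c : 'rV[R]_m) (w : 'cV[R]_n) :
  (forall i, 0 < (G *m w) i 0) -> (forall i, 0 <= c 0 i) -> c != 0 ->
  0 < (c *m G *m w) 0 0.
Proof.
move=> Gw_gt0 c_ge0 /rV0Pn[i ci]; rewrite cone_mul_entry (bigD1 i) //=.
rewrite ltr_wpDr ?mulr_gt0 ?Gw_gt0 ?lt0r ?ci ?c_ge0 //.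
by apply: sumr_ge0 => j _; rewrite mulr_ge0 ?c_ge0 ?ltW ?Gw_gt0.
Qed.

Lemma in_cone_mul_ge0 x w : supporting G w -> in_cone G x -> 0 <= (x *m w) 0 0.
Proof.
move=> w_supp [c [c_ge0 ->]]; rewrite cone_mul_entry.
by apply: sumr_ge0 => i _; rewrite mulr_ge0 // -row_mulmx_entry.
Qed.

Lemma gens_on_face_mul w : gens_on (face_set w) *m w = 0.
Proof.
apply/matrixP => i k; rewrite ord1 !mxE.
have [iS | iS] := boolP (i \in face_set w); last first.
  by rewrite big1 // => j _; rewrite ?mxE (negbTE iS) mul0r.
rewrite (eq_bigr (fun j => G i j * w j 0)) => [|j _]; last by rewrite ?mxE iS.
by move: iS; rewrite inE mxE => /eqP.
Qed.

Lemma row_gens_on S i : row i (gens_on S) = if i \in S then row i G else 0.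
Proof. by apply/rowP => j; rewrite !mxE; case: (i \in S); rewrite ?mxE. Qed.

Lemma in_cone0 : in_cone G 0.
Proof. by exists 0; split=> [i|]; rewrite ?mxE ?mul0mx. Qed.

Lemma in_cone_row i : in_cone G (row i G).
Proof. by exists 'e_i; split=> [j|]; rewrite ?mxE ?ler0n ?rowE. Qed.

Lemma face_sub_gens_on w x :
  supporting G w -> in_face G w x -> (x <= gens_on (face_set w))%MS.
Proof.
move=> w_supp [[c [c_ge0 ->]] xw0].
have Gw_ge0 i : 0 <= (G *m w) i 0 by rewrite -row_mulmx_entry.
have terms0 := psumr_eq0P (fun i _ => mulr_ge0 (c_ge0 i) (Gw_ge0 i))
  (etrans (esym (cone_mul_entry c w)) xw0).
apply/submxP; exists c; apply/rowP => j; rewrite !mxE; apply: eq_bigr => i _.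
rewrite mxE inE; case: eqP => // /eqP Gwi.
by have /eqP := terms0 i isT; rewrite mulf_eq0 (negbTE Gwi) orbF => /eqP ->; rewrite !mul0r.
Qed.

Lemma rank_gens_on_face w d :
  face_cone_dim_le G w d -> (\rank (gens_on (face_set w)) <= d)%N.
Proof.
set X := gens_on _ => dim_le; apply: (dim_le _ (rowsub (maxrankfun X) X) (maxrowsub_free X)).
move=> i; rewrite row_rowsub; split.
  by rewrite row_gens_on; case: ifP => _; [apply: in_cone_row | apply: in_cone0].
by rewrite -row_mul gens_on_face_mul row0 mxE.
Qed.

Lemma gens_sum_in_cone : in_cone G gens_sum.
Proof. by exists (const_mx 1); split=> // i; rewrite mxE. Qed.

Lemma interior_perturbation x t : in_cone G x -> 0 < t ->
  in_cone G (x + t *: gens_sum) /\ in_no_proper_face (x + t *: gens_sum).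
Proof.
move=> [c [c_ge0 xc]] t0; split.
  exists (c + t *: const_mx 1); split; last by rewrite mulmxDl -scalemxAl xc.
  by move=> i; rewrite !mxE mulr1 addr_ge0 ?c_ge0 ?ltW.
move=> w w_supp; rewrite mulmxDl -scalemxAl mxE [X in _ + X = _]mxE.
have xw_ge0 := in_cone_mul_ge0 w_supp (ex_intro _ c (conj c_ge0 xc)).
have yw_ge0 := in_cone_mul_ge0 w_supp gens_sum_in_cone.
move=> pw0.
have yw0 : (gens_sum *m w) 0 0 = 0.
  by apply: le_anti; rewrite yw_ge0 andbT -(pmulr_rle0 _ t0); lra.
have Gw_ge0 i : 0 <= (G *m w) i 0 by rewrite -row_mulmx_entry.
move: yw0; rewrite /gens_sum cone_mul_entry; under eq_bigr do rewrite mxE mul1r.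
by move/(psumr_eq0P (fun i _ => Gw_ge0 i)) => Gw0; apply/colP => i; rewrite [RHS]mxE Gw0.
Qed.

Lemma cone_coercive (w : 'cV[R]_n) : (forall i, 0 < (G *m w) i 0) ->
  exists2 mu, 0 < mu & forall x, in_cone G x -> mu * mxnorm1 x <= mxnorm1 G * (x *m w) 0 0.
Proof.
move=> Gw_gt0; pose mu := \big[Num.min/1]_i (G *m w) i 0.
have mu_gt0 : 0 < mu by apply/bigmin_gtP; split=> // i _.
have mu_le i : mu <= (G *m w) i 0 by apply: bigmin_le.
exists mu => // _ [c [c_ge0 ->]].
have normc : mxnorm1 c = \sum_i c 0 i.
  by rewrite /mxnorm1 big_ord1; apply: eq_bigr => i _; rewrite ger0_norm.
have mu_c : mu * mxnorm1 c <= (c *m G *m w) 0 0.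
  rewrite normc mulr_sumr cone_mul_entry; apply: ler_sum => i _.
  by rewrite mulrC ler_wpM2l.
apply: le_trans (ler_wpM2l (ltW mu_gt0) (mxnorm1M c G)) _.
by rewrite mulrA mulrC ler_wpM2l ?mxnorm1_ge0.
Qed.

Lemma gens_on0 : gens_on set0 = 0.
Proof. by apply/matrixP => i j; rewrite !mxE inE. Qed.

Lemma Pk_max_intro k (B : 'M[R]_(k, n)) p :
  full_dim G -> (0 < k <= n)%N -> in_cone G p -> p != 0 -> (p <= B)%MS ->
  in_no_proper_face p ->
  (forall S, \rank (gens_on S) <= n - k -> ~~ (p <= gens_on S)%MS ->
     \rank (gens_on S + B)%MS = \rank (gens_on S) + \rank B)%N ->
  Pk_max G B.
Proof.
move=> full /andP[k0 kn] p_cone p0 pB p_int transv; split; first by exists p.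
move=> w w_supp w_dim [x [x0 [x_face xB]]].
have rankS := rank_gens_on_face w_dim.
have pS : ~~ (p <= gens_on (face_set w))%MS.
  apply/negP => /submxP[c pc].
  have Gw0 : G *m w = 0.
    by apply: p_int => //; rewrite pc -mulmxA gens_on_face_mul mulmx0 mxE.
  have SG : gens_on (face_set w) = G.
    by apply/matrixP => i j; rewrite mxE inE Gw0 mxE eqxx.
  by move: rankS; rewrite SG full leqNgt ltn_subrL k0 (leq_trans k0 kn).
have := (mxrank_adds_leqif (gens_on (face_set w)) B).2; rewrite transv // eqxx.
move/esym=> cap0; apply: (negP x0); rewrite -submx0; apply: submx_trans cap0.
by rewrite sub_capmx face_sub_gens_on.
Qed.

Lemma interior_perturbation_neq0 x t :
  pointed_gens G -> in_cone G x -> x != 0 -> 0 <= t -> x + t *: gens_sum != 0.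
Proof.
move=> [l Gl_gt0] [c [c_ge0 xc]] x0 t0.
have Gl i : 0 < (G *m l) i 0 by rewrite -row_mulmx_entry.
have xl : 0 < (x *m l) 0 0.
  by rewrite xc cone_mul_gt0 //; apply: contraNneq x0 => c0; rewrite xc c0 mul0mx.
have yl := in_cone_mul_ge0 (fun i => ltW (Gl_gt0 i)) gens_sum_in_cone.
apply: contraTneq (_ : 0 < ((x + t *: gens_sum) *m l) 0 0) => [->|].
  by rewrite mul0mx mxE ltxx.
by rewrite mulmxDl -scalemxAl mxE [X in _ + X]mxE ltr_wpDr // mulr_ge0.
Qed.

Lemma Pk_max_completion k (T : 'M[R]_(1 + k)) p (D : 'M[R]_(k, n)) :
  full_dim G -> (k < n)%N -> T \in unitmx ->
  in_cone G p -> p != 0 -> in_no_proper_face p ->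
  (forall S, \rank (gens_on S) <= n - k.+1 ->
     \rank (gens_on S + p + D)%MS = \rank (gens_on S + p)%MS + k)%N ->
  row_free (T *m col_mx p D) /\ Pk_max G (T *m col_mx p D).
Proof.
move=> full kn T_unit p_cone p0 p_int transv.
have BE : (T *m col_mx p D :=: p + D)%MS.
  apply: eqmx_trans (eqmx_sym (addsmxE p D)).
  by apply: eqmxMfull; rewrite row_full_unit.
have rankB : \rank (T *m col_mx p D) = k.+1.
  have := transv set0; rewrite gens_on0 mxrank0 => /(_ isT).
  by rewrite (adds_eqmx (adds0mx _ _) (eqmx_refl D)) adds0mx rank_rV p0 BE.
split; first by rewrite /row_free rankB.
apply: (Pk_max_intro (k := 1 + k) full kn p_cone p0 _ p_int) => [|S S_small pS].
  by rewrite BE addsmxSl.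
rewrite (adds_eqmx (eqmx_refl _) BE) addsmxA transv //.
by rewrite mxrank_adds_notsub // rankB addSnnS.
Qed.

End Cone.

Section Proposition.
Variables (R : realType) (m n : nat) (G : 'M[R]_(m, n)).

Lemma Pk_sub_closure_max k (A : 'M[R]_(k, n)) :
  pointed_gens G -> full_dim G -> (1 <= k <= n)%N -> Pk G A -> Gr_closure (Pk_max G) A.
Proof.
move=> pointed full k_range [x [x0 [x_cone xA]]] e e0.
case: k A xA k_range => // k A xA /andP[_ kn].
have [alpha x_def] := submxP xA.
have alpha0 : alpha != 0 by apply: contraNneq x0 => alpha0; rewrite x_def alpha0 mul0mx.
have [D0 T_unit] := @row_completion _ k alpha alpha0.
(* The rows of [T *m A] are x followed by a completion; perturb x into the
   interior and the completion into generic position, then pull back by T. *)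
set T := col_mx alpha D0.
have [eta eta0 eta_e] := exists_pmul_lt (mxnorm1_ge0 (invmx T)) e0.
have eta2 : 0 < eta / 2 by rewrite divr_gt0.
have [t t0 t_small] := exists_pmul_lt (mxnorm1_ge0 (gens_sum G)) eta2.
set p := x + t *: gens_sum G.
have [p_cone p_int] := interior_perturbation x_cone t0.
have p0 : p != 0 by apply: interior_perturbation_neq0; rewrite ?ltW.
pose small S := (\rank (gens_on G S) <= n - k.+1)%N.
have small_rank S : small S -> (\rank (gens_on G S + p)%MS + k <= n)%N.
  move=> S_small; have := (mxrank_adds_leqif (gens_on G S) p).1.
  by rewrite rank_rV p0; move: S_small kn; rewrite /small; lia.
have [D [DC transv]] := @transversal_perturbation _ n n _ small (fun S => gens_on G S + p)%MS
  k (D0 *m A) (eta / 2) small_rank eta2.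
have Ti_unit : invmx T \in unitmx by rewrite unitmx_inv.
have [B_free B_max] := Pk_max_completion full kn Ti_unit p_cone p0 p_int transv.
exists (invmx T *m col_mx p D); split=> //; split=> // i j.
have := mxnorm1_entry (A - invmx T *m col_mx p D) i j; rewrite mxE [X in `|_ + X|]mxE.
move/le_lt_trans; apply.
rewrite -[A](mulKmx T_unit) -mulmxBr; apply: le_lt_trans (mxnorm1M _ _) _.
apply: le_lt_trans eta_e; rewrite mulrC ler_wpM2r ?mxnorm1_ge0 // ltW //.
rewrite mul_col_mx -x_def mxnorm1_col_mxB [eta]splitr; apply: ltrD.
  by rewrite /p opprD addrA subrr add0r mxnorm1N mxnorm1Z ger0_norm ?ltW.
by rewrite mxnorm1_distC.
Qed.

Lemma cone_meets_or_separated k (A : 'M[R]_(k, n)) : pointed_gens G ->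
  Pk G A \/ exists2 w : 'cV[R]_n, A *m w = 0 & forall i, 0 < (G *m w) i 0.
Proof.
move=> [l Gl_gt0].
have [[z Hz] | [c [c_ge0 [i ci] c_sum]]] := gordan (fun i => row i (G *m cokermx A)).
  right; exists (cokermx A *m z) => [|i]; first by rewrite mulmxA mulmx_coker mul0mx.
  by rewrite mulmxA -row_mulmx_entry.
left; pose cr := \row_i c i.
have cr0 : cr != 0 by apply/rV0Pn; exists i; rewrite mxE lt0r_neq0.
have cr_ge0 j : 0 <= cr 0 j by rewrite mxE.
have Gl i' : 0 < (G *m l) i' 0 by rewrite -row_mulmx_entry.
exists (cr *m G); split; last split.
- by apply: contraTneq (cone_mul_gt0 Gl cr_ge0 cr0) => ->; rewrite mul0mx mxE ltxx.
- by exists cr.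
- rewrite submxE -mulmxA mulmx_sum_row -{2}c_sum.
  by apply/eqP/eq_bigr => j _; rewrite mxE.
Qed.

Lemma separated_stable k (A : 'M[R]_(k, n)) (w : 'cV[R]_n) :
  row_free A -> A *m w = 0 -> (forall i, 0 < (G *m w) i 0) ->
  exists2 d, 0 < d & forall B, mxnorm1 (A - B) < d -> ~ Pk G B.
Proof.
move=> /row_freeP[Ap AAp] Aw0 Gw_gt0.
have [mu mu0 coercive] := cone_coercive Gw_gt0.
set K := mxnorm1 G * mxnorm1 Ap * mxnorm1 w.
have K_ge0 : 0 <= 2 * K by rewrite !mulr_ge0 ?mxnorm1_ge0.
have [d1 d1_gt0 d1_small] := exists_pmul_lt (mulr_ge0 (ler0n R 2) (mxnorm1_ge0 Ap)) ltr01.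
have [d2 d2_gt0 d2_small] := exists_pmul_lt K_ge0 mu0.
exists (Num.min d1 d2) => [|B]; first by rewrite lt_min d1_gt0.
rewrite lt_min => /andP[AB1 AB2] [x [x0 [x_cone /submxP[beta x_def]]]].
(* Since A w = 0, x w = beta (B - A) w is small compared to |x|, while w is
   coercive on the cone. *)
set dAB := mxnorm1 (A - B).
have dAB_ge0 : 0 <= dAB := mxnorm1_ge0 _.
have beta_le : mxnorm1 beta <= 2 * (mxnorm1 x * mxnorm1 Ap).
  apply: le_trans (mxnorm1_coef_le (B := B) beta AAp _) _.
    apply: ltW; apply: le_lt_trans d1_small.
    by rewrite -mulrA mulrCA ler_wpM2r ?mulr_ge0 ?mxnorm1_ge0 ?ltW.
  by rewrite -x_def ler_wpM2l ?mxnorm1M.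
have xw_le : (x *m w) 0 0 <= mxnorm1 beta * dAB * mxnorm1 w.
  have -> : x *m w = beta *m (B - A) *m w.
    by rewrite x_def mulmxBr mulmxBl -[beta *m A *m w]mulmxA Aw0 mulmx0 subr0.
  apply: le_trans (ler_norm _) _; apply: le_trans (mxnorm1_entry _ 0 0) _.
  apply: le_trans (mxnorm1M _ _) _; rewrite ler_wpM2r ?mxnorm1_ge0 //.
  by rewrite /dAB mxnorm1_distC mxnorm1M.
have : mu * mxnorm1 x <= mxnorm1 x * (dAB * (2 * K)).
  apply: le_trans (coercive x x_cone) _.
  have xw_bound : (x *m w) 0 0 <= 2 * (mxnorm1 x * mxnorm1 Ap) * dAB * mxnorm1 w.
    by apply: le_trans xw_le _; rewrite !ler_wpM2r ?mxnorm1_ge0.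
  apply: le_trans (ler_wpM2l (mxnorm1_ge0 G) xw_bound) _.
  by rewrite /K le_eqVlt; apply/orP; left; apply/eqP; ring.
apply/negP; rewrite -ltNge mulrC ltr_pM2r ?mxnorm1_gt0 //.
by apply: le_lt_trans d2_small; rewrite ler_wpM2r // ltW.
Qed.

Lemma closure_max_sub_Pk k (A : 'M[R]_(k, n)) :
  pointed_gens G -> row_free A -> Gr_closure (Pk_max G) A -> Pk G A.
Proof.
move=> pointed A_free A_cl.
have [//|[w Aw0 Gw_gt0]] := cone_meets_or_separated A pointed.
have [d d0 not_Pk] := separated_stable A_free Aw0 Gw_gt0.
have [e e0 small] := mxnorm1_small k n d0.
have [B [_ [[B_Pk _] AB]]] := A_cl e e0.
by case: (not_Pk B); first by apply: small => i j; rewrite mxE [X in `|_ + X|]mxE.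
Qed.

End Proposition.

Unset Implicit Arguments. Set Strict Implicit.

Theorem proposition3p6 (R : realType) (m n k : nat) (G : 'M[R]_(m, n)) :
  pointed_gens G -> full_dim G -> (1 <= k <= n)%N ->
  forall A : 'M[R]_(k, n), row_free A ->
    (Pk G A <-> Gr_closure (Pk_max G) A).
Proof.
move=> pointed full k_range A A_free; split.
  exact: Pk_sub_closure_max.
exact: closure_max_sub_Pk.
Qed.
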